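(* Let $\Pi$ be a score-at-end WPTS, let $\Phi_{\mathcal B}$ be the predicate $\bigwedge_{x\in V_p}x\in\mathcal B(x)$ for a truncation function $\mathcal B$, and let $\mathcal M:\mathbb{R}^{|V_p|}\to[0,\infty)$ be a bounded function. Let $\Pi_{\mathcal B,\mathcal M}$ be the truncated WPTS. (1) Suppose that for every transition $\langle\ell,\phi,F_1,\dots,F_k\rangle$ of $\Pi$ having a fork whose destination is not $\ell_{\mathrm{out}}$, and every valuation $\mathbf v$ with $(\ell,\mathbf v)$ reachable in $\Pi$, $\mathbf v\models\phi$ and $\mathbf v\not\models\Phi_{\mathcal B}$, we have $\mathrm{ew}_\Pi(\ell,\mathbf v)\le\mathcal M(\mathbf v)$. Then $[\![\Pi]\!]_{\mathbf v_{\mathrm{init}}}(\mathbb{R}^{|V_p|})\le[\![\Pi_{\mathcal B,\mathcal M}]\!]_{\mathbf v_{\mathrm{init}}}(\mathbb{R}^{|V_p|})$ for all $\mathbf v_{\mathrm{init}}\in\operatorname{supp}\mu_{\mathrm{init}}$. (2) If instead $\mathrm{ew}_\Pi(\ell,\mathbf v)\ge\mathcal M(\mathbf v)$ for all such $(\ell,\mathbf v)$, then $[\![\Pi]\!]_{\mathbf v_{\mathrm{init}}}(\mathbb{R}^{|V_p|})\ge[\![\Pi_{\mathcal B,\mathcal M}]\!]_{\mathbf v_{\mathrm{init}}}(\mathbb{R}^{|V_p|})$ for all $\mathbf v_{\mathrm{init}}\in\operatorname{supp}\mu_{\mathrm{init}}$.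
   Context: A WPTS is a tuple $\Pi=(V_p,V_r,L,\ell_{\mathrm{init}},\ell_{\mathrm{out}},\mu_{\mathrm{init}},\mathcal D,\mathfrak T)$: $V_p,V_r$ finite disjoint sets of program and sampling variables; $L$ finite set of locations with $\ell_{\mathrm{init}},\ell_{\mathrm{out}}\in L$; $\mu_{\mathrm{init}}$ a probability distribution on $\mathbb{R}^{|V_p|}$ with bounded support; $\mathcal D$ a product probability distribution on $\mathbb{R}^{|V_r|}$; $\mathfrak T$ a finite set of transitions $\langle\ell,\phi,F_1,\dots,F_k\rangle$ with measurable guard $\phi$ and forks $F_j=\langle\ell'_j,p_j,\mathrm{upd}_j,\mathrm{wt}_j\rangle$ ($p_j\in(0,1]$, $\sum_jp_j=1$, measurable $\mathrm{upd}_j:\mathbb{R}^{|V_p|}\times\mathbb{R}^{|V_r|}\to\mathbb{R}^{|V_p|}$, measurable $\mathrm{wt}_j:\mathbb{R}^{|V_p|}\times\mathbb{R}^{|V_r|}\to[0,\infty)$), such that for each location $\ell$ that is not a termination location and each $\mathbf v$ exactly one transition from $\ell$ has guard satisfied by $\mathbf v$. Runs from a state $(\ell,\mathbf v)$ start with weight $1$; at a termination location the run stays; otherwise the enabled transition is taken, fork $j$ chosen with probability $p_j$, $\mathbf r\sim\mathcal D$ sampled, next weighted state $(\ell'_j,\mathrm{upd}_j(\mathbf v,\mathbf r),w\cdot\mathrm{wt}_j(\mathbf v,\mathbf r))$. $T$ is the first time a termination location is reached, $\hat w_T$ the weight then. $\mathrm{ew}_\Pi(\ell,\mathbf v):=\mathbb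 E_{(\ell,\mathbf v)}[\mathbf 1_{T<\infty}\hat w_T]$ and $[\![\Pi]\!]_{\mathbf v}(\mathbb{R}^{|V_p|}):=\mathrm{ew}_\Pi(\ell_{\mathrm{init}},\mathbf v)$. A state is reachable if it occurs in some run from $(\ell_{\mathrm{init}},\mathbf v_0)$, $\mathbf v_0\in\operatorname{supp}\mu_{\mathrm{init}}$. $\Pi$ is score-at-end if: (i) $\mathbb P_{(\ell_{\mathrm{init}},\mathbf v)}(T<\infty)=1$ for all $\mathbf v\in\operatorname{supp}\mu_{\mathrm{init}}$; (ii) exactly one transition has a fork with destination $\ell_{\mathrm{out}}$, of the form $\langle\ell,\phi,F\rangle$ with single fork $F=\langle\ell_{\mathrm{out}},1,\mathrm{id},\mathrm{wt}\rangle$, $\mathrm{id}(\mathbf v,\mathbf r)=\mathbf v$, $0\le\mathrm{wt}\le M$ for a constant $M>0$; (iii) every other fork has score function constantly $1$. A truncation function $\mathcal B$ maps each $x\in V_p$ to a bounded interval $\mathcal B(x)\subseteq\mathbb{R}$. The truncated WPTS $\Pi_{\mathcal B,\mathcal M}$ has locations $L\cup\{\sharp\}$ with $\sharp$ fresh, both $\ell_{\mathrm{out}}$ and $\sharp$ are termination locations (runs stay there), the same $V_p,V_r,\ell_{\mathrm{init}},\mu_{\mathrm{init}},\mathcal D$, and transitions: for each transition $\langle\ell,\phi,F_1,\dots,F_k\rangle$ of $\Pi$ with $\ell\ne\ell_{\mathrm{out}}$, (a) $\langle\ell,\phi\wedge\Phi_{\mathcal B},F_1,\dots,F_k\rangle$,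 and (b) $\langle\ell,\phi\wedge\neg\Phi_{\mathcal B},F^{\sharp}_1,\dots,F^{\sharp}_k\rangle$ where for $F=\langle\ell',p,\mathrm{upd},\mathrm{wt}\rangle$, $F^\sharp:=F$ if $\ell'=\ell_{\mathrm{out}}$ and otherwise $F^\sharp:=\langle\sharp,p,\mathrm{upd},\mathcal M'\rangle$ with score function $\mathcal M'(\mathbf v,\mathbf r):=\mathcal M(\mathbf v)$. *)

From Stdlib Require List.
From HB Require Import structures.
From mathcomp Require Import all_boot all_order all_algebra.
From mathcomp Require Import all_classical all_reals all_analysis.
Import Order.TTheory GRing.Theory Num.Theory.

Set Implicit Arguments.
Unset Strict Implicit.
Unset Printing Implicit Defensive.

Local Open Scope classical_set_scope.
Local Open Scope ring_scope.

(* Valuations of the program variables V_p are np.-tuple R (V_p = 'I_np),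
   valuations of the sampling variables V_r are nr.-tuple R (V_r = 'I_nr).
   n.-tuple R carries the product (Borel) sigma-algebra of mathcomp-analysis. *)

Section WPTS.
Variables (R : realType) (L : Type) (np nr : nat).

Record fork := Fork {
  f_dest : L;
  f_prob : R;
  f_upd  : np.-tuple R * nr.-tuple R -> np.-tuple R;
  f_wt   : np.-tuple R * nr.-tuple R -> R }.

Record transition := Trans {
  t_src   : L;
  t_guard : set (np.-tuple R);
  t_forks : seq fork }.

(* A WPTS; [term] is the set of termination locations (runs stay there). *)
Record wpts := WPTS {
  linit   : L;
  lout    : L;
  term    : L -> bool;
  mu_init : probability (np.-tuple R) R;
  distr   : probability (nr.-tuple R) R;
  trans   : seq transition }.

End WPTS.

Arguments Fork {R L np nr}.
Arguments Trans {R L np nr}.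
Arguments WPTS {R L np nr}.

Section Semantics.
Variables (R : realType) (n : nat).

Definition supp (mu : probability (n.-tuple R) R) (v : n.-tuple R) : Prop :=
  forall e : R, 0 < e ->
    (0 < mu [set w | forall i : 'I_n, (`|tnth w i - tnth v i| < e)%R])%E.

Definition bounded_support (mu : probability (n.-tuple R) R) : Prop :=
  exists C : R, forall v, supp mu v -> forall i : 'I_n, `|tnth v i| <= C.

Definition product_distr (mu : probability (n.-tuple R) R) : Prop :=
  exists Ds : 'I_n -> probability R R,
    forall A : 'I_n -> set R, (forall i, measurable (A i)) ->
      mu [set w | forall i : 'I_n, A i (tnth w i)] = (\prod_(i < n) Ds i (A i))%E.

End Semantics.

Section WPTSSemantics.
Variables (R : realType) (L : finType) (np nr : nat).
Local Notation fork := (fork R L np nr).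
Local Notation transition := (transition R L np nr).
Local Notation wpts := (wpts R L np nr).

Definition wf_fork (f : fork) : Prop :=
  [/\ 0 < f_prob f <= 1,
      measurable_fun setT (f_upd f),
      measurable_fun setT (f_wt f) &
      forall x, 0 <= f_wt f x].

Definition well_formed (P : wpts) : Prop :=
  [/\ forall t, List.In t (trans P) ->
        [/\ measurable (t_guard t),
            (forall f, List.In f (t_forks t) -> wf_fork f) &
            \sum_(f <- t_forks t) f_prob f = 1],
      forall l, ~~ term P l -> forall v : np.-tuple R,
        count (fun t => (t_src t == l) && `[< t_guard t v >]) (trans P) = 1%N,
      bounded_support (mu_init P) &
      product_distr (distr P)].

(* ewn_gen P g k l v = E_(l,v)[ 1_{T <= k} * prod of the g-scores up to T ]:
   the finite-horizon expected weight, written out as iterated integrals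
   (one step: the unique enabled transition, fork j with prob. p_j, r ~ D). *)
Fixpoint ewn_gen (P : wpts) (g : fork -> np.-tuple R * nr.-tuple R -> R)
    (k : nat) (l : L) (v : np.-tuple R) {struct k} : \bar R :=
  if term P l then 1%E else
  match k with
  | 0 => 0%E
  | k'.+1 =>
    (\sum_(t <- trans P | (t_src t == l) && `[< t_guard t v >])
      \sum_(f <- t_forks t)
        (f_prob f)%:E *
        \int[distr P]_r ((g f (v, r))%:E *
                          ewn_gen P g k' (f_dest f) (f_upd f (v, r))))%E
  end.

(* ew_Pi(l, v) = E_(l,v)[1_{T < oo} w_T] = sup_k E_(l,v)[1_{T <= k} w_T]
   (monotone convergence). *)
Definition ew (P : wpts) (l : L) (v : np.-tuple R) : \bar R :=
  ereal_sup (range (fun k => ewn_gen P (@f_wt R L np nr) k l v)).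

Definition term_prob (P : wpts) (l : L) (v : np.-tuple R) : \bar R :=
  ereal_sup (range (fun k => ewn_gen P (fun _ _ => 1) k l v)).

Definition denot (P : wpts) (v : np.-tuple R) : \bar R := ew P (linit P) v.

Inductive reachable (P : wpts) : L -> np.-tuple R -> Prop :=
| reach_init v : supp (mu_init P) v -> reachable P (linit P) v
| reach_step l v t f r :
    reachable P l v -> ~~ term P l ->
    List.In t (trans P) -> t_src t = l -> t_guard t v ->
    List.In f (t_forks t) -> supp (distr P) r ->
    reachable P (f_dest f) (f_upd f (v, r)).

Definition score_at_end (P : wpts) : Prop :=
  [/\
      forall v, supp (mu_init P) v -> term_prob P (linit P) v = 1%E,
      count (fun t => has (fun f => f_dest f == lout P) (t_forks t)) (trans P) = 1%N,
      (forall t, List.In t (trans P) ->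
         has (fun f => f_dest f == lout P) (t_forks t) ->
         exists F, [/\ t_forks t = [:: F], f_dest F = lout P, f_prob F = 1,
                       f_upd F = fst &
                       exists Mc : R, 0 < Mc /\ forall x, 0 <= f_wt F x <= Mc]) &
      forall t f, List.In t (trans P) -> List.In f (t_forks t) ->
        f_dest f != lout P -> forall x, f_wt f x = 1].

Definition itv_bounded (i : interval R) : bool :=
  match i with Interval (BSide _ _) (BSide _ _) => true | _ => false end.

Definition PhiB (B : 'I_np -> interval R) (v : np.-tuple R) : Prop :=
  forall x : 'I_np, tnth v x \in B x.

Definition lift_fork (f : fork) : Defs.fork R (option L) np nr :=
  Fork (Some (f_dest f)) (f_prob f) (f_upd f) (f_wt f).

Definition sharp_fork (P : wpts) (M : np.-tuple R -> R) (f : fork)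
    : Defs.fork R (option L) np nr :=
  if f_dest f == lout P then lift_fork f
  else Fork None (f_prob f) (f_upd f) (fun x => M x.1).

Definition trunc_trans (P : wpts) (B : 'I_np -> interval R)
    (M : np.-tuple R -> R) (t : transition)
    : seq (Defs.transition R (option L) np nr) :=
  if t_src t == lout P then [::]
  else [:: Trans (Some (t_src t)) (t_guard t `&` PhiB B) (map lift_fork (t_forks t));
           Trans (Some (t_src t)) (t_guard t `&` ~` PhiB B)
                 (map (sharp_fork P M) (t_forks t))].

(* Pi_{B,M}: locations option L, None = sharp; l_out and sharp terminal. *)
Definition truncated (P : wpts) (B : 'I_np -> interval R)
    (M : np.-tuple R -> R) : Defs.wpts R (option L) np nr :=
  WPTS (Some (linit P)) (Some (lout P))
       (fun l => if l is Some l' then term P l' else true)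
       (mu_init P) (distr P)
       (flatten (map (trunc_trans P B M) (trans P))).

End WPTSSemantics.

(* Write [ew] as the supremum of the finite-horizon weights [ew_k], which obey
   a one-step recursion.  The truncated program runs like [P] while the state
   stays in the box [PhiB B]; at a state leaving the box through a transition
   with a fork not going to [lout] (score-at-end then forces all its forks to
   avoid [lout], with score 1) it stops with weight [M v].  Induction on [k]
   over reachable states gives (1) [ew_k <= ew^trunc_k], since at an exit state
   [ew_k <= ew <= M], and (2) [ew^trunc_k <= ew], since by monotone convergence
   [ew] satisfies the one-step recursion as an inequality.  Continuations only
   need to be compared after samples in the support of the sampling
   distribution, which has full measure, and these keep the successor states
   reachable. *)

From Pilot Require Import Defs.
From Stdlib Require List.
From HB Require Import structures.
From mathcomp Require Import all_boot all_order all_algebra.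
From mathcomp Require Import all_classical all_reals all_analysis.
From mathcomp Require Import measurable_realfun.
Import Order.TTheory GRing.Theory Num.Theory.
Local Open Scope classical_set_scope.
Local Open Scope ring_scope.

Section TupleBoxes.
Variables (R : realType) (n : nat).

Lemma measurable_tuple_box (A : 'I_n -> set R) :
  (forall i, measurable (A i)) ->
  measurable [set w : n.-tuple R | forall i, A i (tnth w i)].
Proof.
move=> mA.
have -> : [set w : n.-tuple R | forall i, A i (tnth w i)] =
    \bigcap_(i in [set: 'I_n]) (setT `&` (fun w => tnth w i) @^-1` A i).
  by apply/seteqP; split=> [w Aw i _|w Aw i]; [split | have [] := Aw i Logic.I].
apply: fin_bigcap_measurable; first exact: finite_finset.
by move=> i _; exact: measurable_tnth.
Qed.

Definition sup_ball (c : n.-tuple R) (e : R) : set (n.-tuple R) :=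
  [set w | forall i, `|tnth w i - tnth c i| < e].

Lemma measurable_sup_ball c e : measurable (sup_ball c e).
Proof.
have -> : sup_ball c e =
    [set w | forall i, `](tnth c i - e), (tnth c i + e)[%classic (tnth w i)].
  by apply/seteqP; split=> w H i; move: (H i); rewrite /= in_itv /= -ltr_distlC distrC.
apply: (@measurable_tuple_box (fun i => `](tnth c i - e), (tnth c i + e)[%classic)).
by move=> i; exact: measurable_itv.
Qed.

(* The complement of the support is covered by the null balls with rational
   centre and radius, of which there are countably many. *)
Lemma negligible_not_supp (mu : probability (n.-tuple R) R) :
  mu.-negligible (~` supp mu).
Proof.
pose ball_of (k : nat) : set (n.-tuple R) :=
  match unpickle k with
  | Some (q, rho) =>
      let c := [tuple of map (@ratr R) (q : n.-tuple rat)] in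
      if pselect (mu (sup_ball c (ratr rho)) = 0%E) then sup_ball c (ratr rho)
      else set0
  | None => set0
  end.
apply: (@negligibleS _ _ _ mu (\bigcup_k ball_of k)); last first.
  apply: negligible_bigcup => k; rewrite /ball_of.
  case: (unpickle k) => [[q rho]|]; last exact: negligible_set0.
  case: pselect => null; last exact: negligible_set0.
  by move: null; set b := sup_ball _ _ => null; exists b; split => //;
    exact: measurable_sup_ball.
move=> r /= r_notin.
have [e e0 null_e] : exists2 e : R, 0 < e & mu (sup_ball r e) = 0%E.
  apply: contra_notP r_notin => H e e0; rewrite lt0e measure_ge0 andbT.
  by apply/eqP => He; apply: H; exists e.
have [rho] := @rat_in_itvoo R 0 (e / 2) ltac:(by rewrite divr_gt0).
rewrite in_itv /= => /andP[rho0 rho_e].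
have near_q i : exists q : rat,
    ratr q \in `](tnth r i - ratr rho), (tnth r i + ratr rho)[.
  by apply: rat_in_itvoo; rewrite ltrBlDr -addrA ltrDl addr_gt0.
pose q := [tuple xchoose (near_q i) | i < n].
pose c := [tuple of map (@ratr R) (q : n.-tuple rat)].
have c_near i : `|tnth r i - tnth c i| < ratr rho.
  rewrite /c tnth_map /q tnth_mktuple.
  by have := xchooseP (near_q i); rewrite in_itv /= -ltr_distlC distrC.
have ball_sub : sup_ball c (ratr rho) `<=` sup_ball r e.
  move=> w w_in i; rewrite -(subrKA (tnth c i)).
  apply: le_lt_trans (ler_normD _ _) _; rewrite [e]splitr.
  by apply: ltrD; apply: lt_trans rho_e; rewrite // distrC.
have null_c : mu (sup_ball c (ratr rho)) = 0%E.
  apply/eqP; rewrite -measure_le0 -null_e; apply: le_measure => //;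
    rewrite inE; exact: measurable_sup_ball.
by exists (pickle (q, rho)) => //; rewrite /ball_of pickleK; case: pselect.
Qed.

End TupleBoxes.

Section ListIn.
Variable T : Type.

Lemma In_filter_cons (p : pred T) s x r :
  seq.filter p s = x :: r -> List.In x s /\ p x.
Proof.
elim: s => [|y s IH] //=; case: ifP => py; last by move/IH => [? ?]; split; [right|].
by case=> <- _; split; [left|].
Qed.

Lemma all_In (p : pred T) s x : all p s -> List.In x s -> p x.
Proof. by elim: s => [|y s IH] //= /andP[py ps] [<-|/(IH ps)]. Qed.

Lemma In_cat (s1 s2 : seq T) x : List.In x (s1 ++ s2) -> List.In x s1 \/ List.In x s2.
Proof.
elim: s1 => [|y s1 IH] /=; first by right.
by case=> [->|/IH[]]; [left; left | left; right | right].
Qed.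

Lemma In_map U (F : U -> T) s x :
  List.In x (map F s) -> exists2 y, List.In y s & x = F y.
Proof.
elim: s => [|y s IH] //= [<-|/IH[z z_in ->]]; first by exists y; [left|].
by exists z; [right|].
Qed.

Lemma In_flatten_map U (F : U -> seq T) s x :
  List.In x (flatten (map F s)) -> exists2 y, List.In y s & List.In x (F y).
Proof.
elim: s => [|y s IH] //= /In_cat[x_in|/IH[z z_in x_in]]; first by exists y; [left|].
by exists z; [right|].
Qed.

End ListIn.

Arguments In_filter_cons {T p s x r}.
Arguments all_In {T p s x}.
Arguments In_cat {T s1 s2 x}.
Arguments In_map {T U F s x}.
Arguments In_flatten_map {T U F s x}.

Section BigIn.
Variables (V : Type) (idx : V) (op : V -> V -> V) (T : Type).

Lemma eq_big_In (s : seq T) (c : pred T) (F G : T -> V) :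
  (forall x, List.In x s -> c x -> F x = G x) ->
  \big[op/idx]_(x <- s | c x) F x = \big[op/idx]_(x <- s | c x) G x.
Proof.
elim: s => [|x s IH] FG; first by rewrite !big_nil.
rewrite !big_cons IH => [|y y_in]; last by apply: FG; right.
by case: ifP => // cx; rewrite FG //; left.
Qed.

Lemma big_In_cond (s : seq T) (c : pred T) (F : T -> V) :
  (forall x, List.In x s -> c x) ->
  \big[op/idx]_(x <- s | c x) F x = \big[op/idx]_(x <- s) F x.
Proof.
elim: s => [|x s IH] sc; first by rewrite !big_nil.
by rewrite !big_cons sc ?IH // => [y y_in|]; [apply: sc; right | left].
Qed.

End BigIn.

Arguments eq_big_In {V idx op T s c F G}.
Arguments big_In_cond {V idx op T s c F}.

Local Open Scope ereal_scope.

Section SumsIn.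
Variables (R : realType) (T : Type).

Lemma lee_sum_In (s : seq T) (c : pred T) (F G : T -> \bar R) :
  (forall x, List.In x s -> c x -> F x <= G x) ->
  \sum_(x <- s | c x) F x <= \sum_(x <- s | c x) G x.
Proof.
elim: s => [|x s IH] FG; first by rewrite !big_nil.
rewrite !big_cons; case: ifP => cx; last by apply: IH => y y_in; apply: FG; right.
by apply: leeD; [apply: FG => //; left | apply: IH => y y_in; apply: FG; right].
Qed.

Lemma sume_In_ge0 (s : seq T) (c : pred T) (F : T -> \bar R) :
  (forall x, List.In x s -> c x -> 0 <= F x) -> 0 <= \sum_(x <- s | c x) F x.
Proof. by move=> F0; apply: le_trans (@lee_sum_In s c (fun=> 0) F F0); rewrite big1_eq. Qed.

Lemma cvg_nnesum_In (s : seq T) (u : T -> nat -> \bar R) (l : T -> \bar R) :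
  (forall x, List.In x s -> forall n, 0 <= u x n) ->
  (forall x, List.In x s -> u x n @[n --> \oo] --> l x) ->
  \sum_(x <- s) u x n @[n --> \oo] --> \sum_(x <- s) l x.
Proof.
move=> u0 ul; pose c x := `[< List.In x s >].
have cP x : List.In x s -> c x by move=> ?; exact/asboolP.
have -> : (fun n => \sum_(x <- s) u x n) = fun n => \sum_(x <- s | c x) u x n.
  by apply/funext => n; rewrite (big_In_cond cP).
rewrite -(big_In_cond cP); apply: cvg_nnesum => x /asboolP x_in.
  exact/nearW/u0.
exact: ul.
Qed.

End SumsIn.

Lemma measurable_fun_asbool d (X : measurableType d) (A : set X) :
  measurable A -> measurable_fun setT (fun x => `[< A x >]).
Proof.
move=> mA; apply: (measurable_fun_bool true); rewrite setTI.
by rewrite (_ : _ @^-1` _ = A) //; apply/seteqP; split=> x /= /asboolP.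
Qed.

Lemma measurable_sum_In d (X : measurableType d) (R : realType) T (s : seq T)
    (c : T -> X -> bool) (F : T -> X -> \bar R) :
  (forall x, List.In x s -> measurable_fun setT (c x)) ->
  (forall x, List.In x s -> measurable_fun setT (F x)) ->
  measurable_fun setT (fun v => \sum_(x <- s | c x v) F x v).
Proof.
elim: s => [|x s IH] mc mF.
  by under eq_fun do rewrite big_nil; exact: measurable_cst.
under eq_fun do rewrite big_cons.
have mtail : measurable_fun setT (fun v => \sum_(y <- s | c y v) F y v).
  by apply: IH => y y_in; [apply: mc | apply: mF]; right.
by apply: measurable_fun_ifT => //; [apply: mc | apply: emeasurable_funD => //; apply: mF];
  left.
Qed.

Lemma measurable_section_mul d1 d2 d3 (X : measurableType d1) (Y : measurableType d2)
    (Z : measurableType d3) (R : realType) (x : X) (G : X * Y -> R)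
    (U : X * Y -> Z) (h : Z -> \bar R) :
  measurable_fun setT G -> measurable_fun setT U -> measurable_fun setT h ->
  measurable_fun setT (fun y => (G (x, y))%:E * h (U (x, y))).
Proof.
move=> mG mU mh; apply: emeasurable_funM.
  exact/measurable_EFinP/(measurable_fun_pair2 x mG).
exact: measurableT_comp mh (measurable_fun_pair2 x mU).
Qed.

Section StepValue.
Variables (R : realType) (L : Type) (np nr : nat).
Variables (D : probability (nr.-tuple R) R)
  (g : fork R L np nr -> np.-tuple R * nr.-tuple R -> R).

Definition wf_forks (fs : seq (fork R L np nr)) : Prop :=
  forall f, List.In f fs ->
    [/\ (0 <= f_prob f)%R, measurable_fun setT (f_upd f),
        measurable_fun setT (g f) & forall x, (0 <= g f x)%R].

Definition step_value (fs : seq (fork R L np nr))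
    (h : fork R L np nr -> np.-tuple R -> \bar R) (v : np.-tuple R) : \bar R :=
  \sum_(f <- fs) (f_prob f)%:E * \int[D]_r ((g f (v, r))%:E * h f (f_upd f (v, r))).

Variable fs : seq (fork R L np nr).
Hypothesis wf_fs : wf_forks fs.

Lemma step_value_ge0 h v : (forall f x, 0 <= h f x) -> 0 <= step_value fs h v.
Proof.
move=> h0; apply: sume_In_ge0 => f /wf_fs[p0 _ _ g0] _.
apply: mule_ge0; first by rewrite lee_fin.
by apply: integral_ge0 => r _; apply: mule_ge0; rewrite ?lee_fin.
Qed.

Lemma le_step_value h1 h2 v :
  (forall f, measurable_fun setT (h1 f)) -> (forall f, measurable_fun setT (h2 f)) ->
  (forall f x, 0 <= h1 f x) -> (forall f x, 0 <= h2 f x) ->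
  (forall f r, List.In f fs -> supp D r -> h1 f (f_upd f (v, r)) <= h2 f (f_upd f (v, r))) ->
  step_value fs h1 v <= step_value fs h2 v.
Proof.
move=> m1 m2 h10 h20 h12; apply: lee_sum_In => f f_in _.
have [p0 mu mg g0] := wf_fs _ f_in.
apply: lee_wpmul2l; first by rewrite lee_fin.
apply: ae_ge0_le_integral => //.
- by move=> r _; apply: mule_ge0; rewrite ?lee_fin.
- exact: measurable_section_mul.
- by move=> r _; apply: mule_ge0; rewrite ?lee_fin.
- exact: measurable_section_mul.
have [N [mN N0 notsuppN]] := @negligible_not_supp _ _ D.
exists N; split => // r /= r_notin; apply: notsuppN => r_supp; apply: r_notin => _.
by apply: lee_wpmul2l; rewrite ?lee_fin //; exact: h12.
Qed.

Lemma measurable_step_value h :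
  (forall f, measurable_fun setT (h f)) -> (forall f x, 0 <= h f x) ->
  measurable_fun setT (step_value fs h).
Proof.
move=> mh h0; apply: measurable_sum_In => f f_in; first exact: measurable_cst.
have [p0 mu mg g0] := wf_fs _ f_in.
apply: emeasurable_funM; first exact: measurable_cst.
pose k z := (g f z)%:E * h f (f_upd f z).
have -> : (fun v => \int[D]_r ((g f (v, r))%:E * h f (f_upd f (v, r)))) = fubini_F D k by [].
apply: measurable_fun_fubini_tonelli_F.
  by apply: emeasurable_funM; [exact/measurable_EFinP | exact: measurableT_comp].
by move=> z; apply: mule_ge0; rewrite ?lee_fin.
Qed.

Lemma cvg_step_value (h : nat -> fork R L np nr -> np.-tuple R -> \bar R) v :
  (forall j f, measurable_fun setT (h j f)) -> (forall j f x, 0 <= h j f x) ->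
  (forall f x, nondecreasing_seq (fun j => h j f x)) ->
  step_value fs (h j) v @[j --> \oo] -->
  step_value fs (fun f x => ereal_sup (range (fun j => h j f x))) v.
Proof.
move=> mh h0 h_nd; apply: cvg_nnesum_In => f /wf_fs[p0 mu mg g0].
  move=> j; apply: mule_ge0; first by rewrite lee_fin.
  by apply: integral_ge0 => r _; apply: mule_ge0; rewrite ?lee_fin.
apply: cvgeZl => //.
have := @cvg_monotone_convergence _ _ _ D setT measurableT
  (fun j r => (g f (v, r))%:E * h j f (f_upd f (v, r))).
have -> : (fun r => limn (fun j => (g f (v, r))%:E * h j f (f_upd f (v, r)))) =
    (fun r => (g f (v, r))%:E * ereal_sup (range (fun j => h j f (f_upd f (v, r))))).
  apply/funext => r; apply/cvg_lim => //; apply: cvgeZl => //.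
  exact: ereal_nondecreasing_cvgn.
apply.
- by move=> j; exact: measurable_section_mul.
- by move=> j r _; apply: mule_ge0; rewrite ?lee_fin.
- by move=> r _ a b ab; apply: lee_wpmul2l; rewrite ?lee_fin //; exact: h_nd.
Qed.

End StepValue.

Arguments wf_forks {R L np nr}.
Arguments step_value {R L np nr}.
Arguments step_value_ge0 {R L np nr D g fs}.
Arguments le_step_value {R L np nr D g fs}.
Arguments measurable_step_value {R L np nr D g fs}.
Arguments cvg_step_value {R L np nr D g fs}.

Section ExpectedWeight.
Variables (R : realType) (L : finType) (np nr : nat) (Q : wpts R L np nr)
  (g : fork R L np nr -> np.-tuple R * nr.-tuple R -> R).

Definition wf_scores : Prop :=
  forall t, List.In t (trans Q) -> measurable (t_guard t) /\ wf_forks g (t_forks t).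

Hypothesis wfQ : wf_scores.

Lemma ewn_gen_succ k l v : ~~ term Q l ->
  ewn_gen Q g k.+1 l v =
  \sum_(t <- trans Q | (t_src t == l) && `[< t_guard t v >])
    step_value (distr Q) g (t_forks t) (fun f => ewn_gen Q g k (f_dest f)) v.
Proof. by move=> /negbTE /= ->. Qed.

Lemma ewn_gen_term k l : term Q l -> ewn_gen Q g k l = cst 1.
Proof. by move=> tl; apply/funext => v; case: k => /=; rewrite tl. Qed.

Lemma ewn_gen_ge0 k l v : 0 <= ewn_gen Q g k l v.
Proof.
have [tl|nt] := boolP (term Q l); first by rewrite ewn_gen_term.
elim: k l v nt => [|k IH] l v nt; first by rewrite /= (negbTE nt).
rewrite ewn_gen_succ //; apply: sume_In_ge0 => t /wfQ[_ wft] _.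
apply: step_value_ge0 => // f x.
by have [tl|ntl] := boolP (term Q (f_dest f)); [rewrite ewn_gen_term | exact: IH].
Qed.

Lemma measurable_ewn_gen k l : measurable_fun setT (ewn_gen Q g k l).
Proof.
elim: k l => [|k IH] l; have [tl|nt] := boolP (term Q l);
  try by rewrite ewn_gen_term //; exact: measurable_cst.
  suff -> : ewn_gen Q g 0 l = cst 0 by exact: measurable_cst.
  by apply/funext => v /=; rewrite (negbTE nt).
have -> : ewn_gen Q g k.+1 l = fun v =>
    \sum_(t <- trans Q | (t_src t == l) && `[< t_guard t v >])
      step_value (distr Q) g (t_forks t) (fun f => ewn_gen Q g k (f_dest f)) v.
  by apply/funext => v; rewrite ewn_gen_succ.
apply: measurable_sum_In => t /wfQ[mt wft].
  by apply: measurable_and; [exact: measurable_cst | exact: measurable_fun_asbool].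
by apply: (measurable_step_value wft) => [f|f x]; [exact: IH | exact: ewn_gen_ge0].
Qed.

Lemma ewn_gen_nondecreasing l v : nondecreasing_seq (fun k => ewn_gen Q g k l v).
Proof.
apply/nondecreasing_seqP => k; elim: k l v => [|k IH] l v;
  have [tl|nt] := boolP (term Q l); try by rewrite !ewn_gen_term.
  suff -> : ewn_gen Q g 0 l v = 0 by exact: ewn_gen_ge0.
  by rewrite /= (negbTE nt).
rewrite !ewn_gen_succ //; apply: lee_sum_In => t /wfQ[_ wft] _.
by apply: (le_step_value wft) => [f|f|f x|f x|f r _ _];
  [exact: measurable_ewn_gen | exact: measurable_ewn_gen | exact: ewn_gen_ge0 ..| exact: IH].
Qed.

End ExpectedWeight.

Arguments wf_scores {R L np nr}.
Arguments ewn_gen_ge0 {R L np nr Q g}.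
Arguments ewn_gen_term {R L np nr Q g}.
Arguments measurable_ewn_gen {R L np nr Q g}.
Arguments ewn_gen_nondecreasing {R L np nr Q g}.

Section ExpectedWeightLimit.
Variables (R : realType) (L : finType) (np nr : nat) (Q : wpts R L np nr).
Local Notation wt := (@f_wt R L np nr).

Lemma ewn_le_ew k l v : ewn_gen Q wt k l v <= ew Q l v.
Proof. by apply: ereal_sup_ubound; exists k. Qed.

Hypothesis wfQ : wf_scores Q wt.

Lemma ew_ge0 l v : 0 <= ew Q l v.
Proof. exact: le_trans (ewn_gen_ge0 wfQ 0 l v) (ewn_le_ew 0 l v). Qed.

Lemma measurable_ew l : measurable_fun setT (ew Q l).
Proof.
apply: (emeasurable_fun_cvg (fun k => ewn_gen Q wt k l)) => [k|v _].
  exact: measurable_ewn_gen.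
exact/ereal_nondecreasing_cvgn/ewn_gen_nondecreasing.
Qed.

Lemma step_value_ew_le l v fs : wf_forks wt fs ->
  (forall k, ewn_gen Q wt k.+1 l v =
             step_value (distr Q) wt fs (fun f => ewn_gen Q wt k (f_dest f)) v) ->
  step_value (distr Q) wt fs (fun f => ew Q (f_dest f)) v <= ew Q l v.
Proof.
move=> wf_fs succ.
have lim_step : step_value (distr Q) wt fs (fun f => ewn_gen Q wt k (f_dest f)) v
    @[k --> \oo] --> step_value (distr Q) wt fs (fun f => ew Q (f_dest f)) v.
  apply: (cvg_step_value (D := distr Q) wf_fs) => [k f|k f x|f x].
  - exact: measurable_ewn_gen.
  - exact: ewn_gen_ge0.
  - exact: ewn_gen_nondecreasing.
apply: cvge_le lim_step; apply: nearW => k.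
by rewrite -succ; exact: ewn_le_ew.
Qed.

End ExpectedWeightLimit.

Arguments ewn_le_ew {R L np nr Q}.
Arguments ew_ge0 {R L np nr Q}.
Arguments measurable_ew {R L np nr Q}.
Arguments step_value_ew_le {R L np nr Q} wfQ {l v fs}.

Lemma integral_cst_probability d (X : measurableType d) (R : realType)
    (mu : probability X R) (c : \bar R) :
  \int[mu]_x c = c.
Proof.
rewrite -[fun=> c]/(cst c) integral_cst // -[RHS]mule1; congr (_ * _).
exact: probability_setT.
Qed.

Section Truncation.
Variables (R : realType) (L : finType) (np nr : nat) (P : wpts R L np nr)
  (B : 'I_np -> interval R) (M : np.-tuple R -> R).
Hypotheses (wfP : well_formed P) (saeP : score_at_end P) (term_out : term P (lout P))
  (M_ge0 : forall v, (0 <= M v)%R) (mM : measurable_fun setT M).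

Local Notation T := (truncated P B M).
Local Notation wtP := (@f_wt R L np nr).
Local Notation wtT := (@f_wt R (option L) np nr).
Local Notation ewP k := (ewn_gen P wtP k).
Local Notation ewT k := (ewn_gen T wtT k).

Lemma measurable_PhiB : measurable (PhiB B).
Proof.
by apply: (@measurable_tuple_box _ _ (fun i => [set` B i])) => i; exact: measurable_itv.
Qed.

Lemma wf_scores_P : wf_scores P wtP.
Proof.
case: wfP => wf_trans _ _ _ t t_in; have [mt wf_fs _] := wf_trans t t_in.
by split=> // f /wf_fs[/andP[p0 _] mu mw w0]; split=> //; exact: ltW.
Qed.

Lemma wf_scores_T : wf_scores T wtT.
Proof.
case: wfP => wf_trans _ _ _ t' /In_flatten_map[t t_in t'_in].
have [mt wf_fs _] := wf_trans t t_in.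
move: t'_in; rewrite /trunc_trans; case: ifP => _ //= [<-|[<-|[]]].
- split; first exact: measurableI mt measurable_PhiB.
  move=> _ /In_map[f /wf_fs[/andP[p0 _] mu mw w0] ->].
  by split=> //; exact: ltW.
- split; first exact: measurableI mt (measurableC measurable_PhiB).
  move=> _ /In_map[f /wf_fs[/andP[p0 _] mu mw w0] ->].
  rewrite /sharp_fork; case: ifP => _; first by split=> //; exact: ltW.
  by split=> //=; [exact: ltW | exact: measurableT_comp mM measurable_fst].
Qed.

Definition enabled (l : L) (v : np.-tuple R) (t : transition R L np nr) : bool :=
  (t_src t == l) && `[< t_guard t v >].

Lemma enabled_unique {l} v : ~~ term P l ->
  exists t0, [/\ seq.filter (enabled l v) (trans P) = [:: t0],
                 List.In t0 (trans P), t_src t0 = l & t_guard t0 v].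
Proof.
case: wfP => _ deterministic _ _ nt.
have := deterministic l nt v; rewrite -size_filter -/(enabled l v).
case E: (seq.filter _ _) => [|t0 [|]] // _; exists t0.
by have [t0_in /andP[/eqP src /asboolP guard]] := In_filter_cons E.
Qed.

Lemma ewP_succ k {l v t0} : ~~ term P l ->
  seq.filter (enabled l v) (trans P) = [:: t0] ->
  ewP k.+1 l v = step_value (distr P) wtP (t_forks t0) (fun f => ewP k (f_dest f)) v.
Proof. by move=> nt en_t0; rewrite ewn_gen_succ // -big_filter en_t0 big_seq1. Qed.

Lemma ewT_succ k {l v t0} : ~~ term P l ->
  seq.filter (enabled l v) (trans P) = [:: t0] ->
  ewT k.+1 (Some l) v =
  step_value (distr P) wtT
    (map (if `[< PhiB B v >] then @lift_fork R L np nr else sharp_fork P M) (t_forks t0))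
    (fun f => ewT k (f_dest f)) v.
Proof.
move=> nt en_t0; have [t0_in /andP[/eqP src0 /asboolP guard0]] := In_filter_cons en_t0.
have src_out : t_src t0 != lout P by rewrite src0; apply: contraNneq nt => ->.
rewrite ewn_gen_succ //= big_flatten /= big_map.
rewrite -(@big_rmcond _ _ _ _ _ (enabled l v)); last first.
  move=> t; rewrite /enabled /trunc_trans; case: ifP => _; first by rewrite big_nil.
  rewrite negb_and => not_en; rewrite !big_cons big_nil /=.
  suff disabled (Q : Prop) : (Some (t_src t) == Some l) && `[< t_guard t v /\ Q >] = false.
    by rewrite !disabled.
  case/orP: not_en => [src|guard]; first by rewrite (inj_eq Some_inj) (negbTE src).
  by rewrite asboolF ?andbF // => -[gv _]; move/negP: guard; apply; exact/asboolP.
rewrite -big_filter en_t0 big_seq1 /trunc_trans (negbTE src_out) !big_cons big_nil /=.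
rewrite src0 eqxx /=.
have [Phi|nPhi] := pselect (PhiB B v).
  by rewrite (asboolT Phi) asboolT // asboolF ?adde0 //; case.
by rewrite (asboolF nPhi) asboolF ?asboolT ?adde0 //; case.
Qed.

Lemma score_at_end_forks {t} : List.In t (trans P) ->
  has (fun f => f_dest f != lout P) (t_forks t) ->
  all (fun f => f_dest f != lout P) (t_forks t).
Proof.
case: saeP => _ _ to_out _ t_in.
case E: (has (fun f => f_dest f == lout P) (t_forks t)).
  by have [F [-> dF _ _ _]] := to_out t t_in E; rewrite /= dF eqxx.
by move=> _; move/negbT: E; rewrite -all_predC.
Qed.

Lemma ewT_succ_exit k {l v t0} : ~~ term P l ->
  seq.filter (enabled l v) (trans P) = [:: t0] ->
  ~ PhiB B v -> has (fun f => f_dest f != lout P) (t_forks t0) ->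
  ewT k.+1 (Some l) v = (M v)%:E.
Proof.
move=> nt en_t0 nPhi out; rewrite (ewT_succ k nt en_t0) asboolF // /step_value big_map.
have [t0_in _] := In_filter_cons en_t0.
have not_out f : List.In f (t_forks t0) -> f_dest f != lout P.
  exact: all_In (score_at_end_forks t0_in out).
case: wfP => wf_trans _ _ _; have [_ _ prob1] := wf_trans t0 t0_in.
rewrite (eq_big_In (G := fun f => (f_prob f * M v)%:E)).
  by rewrite sumEFin -mulr_suml prob1 mul1r.
move=> f f_in _; rewrite /sharp_fork (negbTE (not_out f f_in)) /=.
under eq_integral do rewrite ewn_gen_term // mule1.
by rewrite integral_cst_probability EFinM.
Qed.

Lemma ewT_succ_lift k {l v t0} : ~~ term P l ->
  seq.filter (enabled l v) (trans P) = [:: t0] ->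
  PhiB B v \/ ~~ has (fun f => f_dest f != lout P) (t_forks t0) ->
  ewT k.+1 (Some l) v =
  step_value (distr P) wtP (t_forks t0) (fun f => ewT k (Some (f_dest f))) v.
Proof.
move=> nt en_t0 [Phi|all_out]; rewrite (ewT_succ k nt en_t0) /step_value big_map.
  by rewrite asboolT.
case: ifP => // _; apply: eq_big_In => f f_in _.
move: all_out; rewrite -all_predC => /all_In /(_ f_in) /negPn out.
by rewrite /sharp_fork out.
Qed.

Variant ewT_succ_spec k l v t0 : Prop :=
  | EwTSuccExit of ~ PhiB B v & has (fun f => f_dest f != lout P) (t_forks t0) &
      ewT k.+1 (Some l) v = (M v)%:E
  | EwTSuccStep of ewT k.+1 (Some l) v =
      step_value (distr P) wtP (t_forks t0) (fun f => ewT k (Some (f_dest f))) v.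

Lemma ewT_succP k {l v t0} : ~~ term P l ->
  seq.filter (enabled l v) (trans P) = [:: t0] -> ewT_succ_spec k l v t0.
Proof.
move=> nt en_t0.
have [[nPhi out]|not_exit] :=
  pselect (~ PhiB B v /\ has (fun f => f_dest f != lout P) (t_forks t0)).
  by apply: EwTSuccExit; rewrite ?(ewT_succ_exit k nt en_t0).
apply/EwTSuccStep/(ewT_succ_lift k nt en_t0).
have [Phi|nPhi] := pselect (PhiB B v); [by left | right].
by apply/negP => out; apply: not_exit.
Qed.

Definition on_exit_states (Inv : L -> np.-tuple R -> Prop) : Prop :=
  forall t, List.In t (trans P) ->
    has (fun f => f_dest f != lout P) (t_forks t) ->
    forall v, reachable P (t_src t) v -> t_guard t v -> ~ PhiB B v ->
    Inv (t_src t) v.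

Lemma ewP_le_ewT :
  on_exit_states (fun l v => ew P l v <= (M v)%:E) ->
  forall k l v, reachable P l v -> ewP k l v <= ewT k (Some l) v.
Proof.
move=> exit_le k; elim: k => [|k IH] l v reach; first by [].
have [tl|nt] := boolP (term P l); first by rewrite /= tl.
have [t0 [en_t0 t0_in src0 guard0]] := enabled_unique v nt.
case: (ewT_succP k nt en_t0) => [nPhi out ->|->].
  apply: le_trans (ewn_le_ew _ _ _) _.
  by move: (exit_le t0 t0_in out v); rewrite src0; apply.
rewrite (ewP_succ k nt en_t0).
have [_ wf_t0] := wf_scores_P _ t0_in.
apply: (le_step_value wf_t0) => [f|f|f x|f x|f r f_in r_supp].
- exact: (measurable_ewn_gen wf_scores_P).
- exact: (measurable_ewn_gen wf_scores_T).
- exact: (ewn_gen_ge0 wf_scores_P).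
- exact: (ewn_gen_ge0 wf_scores_T).
- exact/IH/(reach_step reach nt t0_in src0 guard0 f_in r_supp).
Qed.

Lemma ewT_le_ew :
  on_exit_states (fun l v => (M v)%:E <= ew P l v) ->
  forall k l v, reachable P l v -> ewT k (Some l) v <= ew P l v.
Proof.
move=> exit_ge k; elim: k => [|k IH] l v reach.
  have -> : ewT 0 (Some l) v = ewP 0 l v by [].
  exact: ewn_le_ew.
have [tl|nt] := boolP (term P l).
  have -> : ewT k.+1 (Some l) v = ewP k.+1 l v by rewrite /= tl.
  exact: ewn_le_ew.
have [t0 [en_t0 t0_in src0 guard0]] := enabled_unique v nt.
case: (ewT_succP k nt en_t0) => [nPhi out ->|->].
  by move: (exit_ge t0 t0_in out v); rewrite src0; apply.
have [_ wf_t0] := wf_scores_P _ t0_in.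
apply: le_trans (step_value_ew_le wf_scores_P wf_t0 (fun k => ewP_succ k nt en_t0)).
apply: (le_step_value wf_t0) => [f|f|f x|f x|f r f_in r_supp].
- exact: (measurable_ewn_gen wf_scores_T).
- exact: (measurable_ew wf_scores_P).
- exact: (ewn_gen_ge0 wf_scores_T).
- exact: (ew_ge0 wf_scores_P).
- exact/IH/(reach_step reach nt t0_in src0 guard0 f_in r_supp).
Qed.

End Truncation.

Local Close Scope ereal_scope.

Theorem theoremC2 (R : realType) (L : finType) (np nr : nat)
    (P : wpts R L np nr) (B : 'I_np -> interval R) (M : np.-tuple R -> R) :
  well_formed P -> score_at_end P -> term P (lout P) ->
  (forall x, itv_bounded (B x)) ->
  (forall v, 0 <= M v) -> (exists C : R, forall v, M v <= C) ->
  measurable_fun setT M ->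
  ((forall t, List.In t (trans P) ->
      has (fun f => f_dest f != lout P) (t_forks t) ->
      forall v, reachable P (t_src t) v -> t_guard t v -> ~ PhiB B v ->
      (ew P (t_src t) v <= (M v)%:E)%E) ->
    forall v, supp (mu_init P) v ->
      (denot P v <= denot (truncated P B M) v)%E)
  /\
  ((forall t, List.In t (trans P) ->
      has (fun f => f_dest f != lout P) (t_forks t) ->
      forall v, reachable P (t_src t) v -> t_guard t v -> ~ PhiB B v ->
      ((M v)%:E <= ew P (t_src t) v)%E) ->
    forall v, supp (mu_init P) v ->
      (denot (truncated P B M) v <= denot P v)%E).
Proof.
move=> wfP saeP term_out _ M_ge0 _ mM.
split=> exit_bound v v_supp; have reach := reach_init v_supp;
  apply: ge_ereal_sup => _ [k _ <-].
- by apply: le_trans (ewn_le_ew k _ _); apply: ewP_le_ewT.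
- by apply: ewT_le_ew.
Qed.
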